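(* Let $N\ge3$ and $p>p_{\rm S}$. For $\gamma>0$ let $u(\cdot,\gamma)$ solve (IVP$_\gamma$), set $y(t,\gamma):=2^{-\frac{q}{p-1}}\frac{u(r,\gamma)}{ar^{-\mu}}$ with $r=e^{mt}$, and $\hat y(s,\gamma):=y\big(s-\frac{\log\gamma}{m\mu},\gamma\big)$. Let $\bar u$ be the solution of $\bar u''+\frac{N-1}{\rho}\bar u'+\bar u^p=0$ $(0<\rho<\infty)$, $\bar u(0)=2^{-\frac{q}{p-1}}$, $\bar u'(0)=0$, and $\bar y(s):=\frac{\bar u(e^{ms})}{ae^{-m\mu s}}$. Then for every $s_0\in\mathbb{R}$, as $\gamma\to\infty$, $\hat y(\cdot,\gamma)\to\bar y$ and $\partial_s\hat y(\cdot,\gamma)\to\bar y'$ uniformly on $(-\infty,s_0]$.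
   Context: $A(r)=\frac{2}{1+r^2}$, $p_{\rm S}=\frac{N+2}{N-2}$, $q=\frac{N-2}{2}(p-p_{\rm S})$, $\mu=\frac{2}{p-1}$, $a=\{\mu(N-2-\mu)\}^{\mu/2}$, $m=a^{-(p-1)/2}$. (IVP$_\gamma$): $u''+\frac{N-1}{r}u'+\frac{N(N-2)}{4}A(r)^2u+A(r)^{-q}|u|^{p-1}u=0$ on $(0,\infty)$, $u(0)=\gamma$, $u'(0)=0$. (For $p>p_{\rm S}$, $\bar u>0$ on $[0,\infty)$.) *)

From Stdlib Require Import Reals Lra.
Open Scope R_scope.

(* x^e for x > 0, and 0 otherwise (e > 0 in all uses) *)
Definition rpow (x e : R) : R := if Rlt_dec 0 x then Rpower x e else 0.

Definition spow (x e : R) : R := rpow (Rabs x) (e - 1) * x.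

Definition A (r : R) : R := 2 / (1 + r ^ 2).
Definition pS (N : nat) : R := (INR N + 2) / (INR N - 2).
Definition qexp (N : nat) (p : R) : R := (INR N - 2) / 2 * (p - pS N).
Definition mu (p : R) : R := 2 / (p - 1).
Definition acst (N : nat) (p : R) : R :=
  Rpower (mu p * (INR N - 2 - mu p)) (mu p / 2).
Definition mcst (N : nat) (p : R) : R := Rpower (acst N p) (- (p - 1) / 2).

(* u solves (IVP_gamma) on (0,oo): u(0)=gamma, u'(0)=0 (one-sided),
   u is C^2-type (twice differentiable) on (0,oo) and satisfies the ODE. *)
Definition IVP_sol (N : nat) (p gamma : R) (u : R -> R) : Prop :=
  u 0 = gamma /\
  limit1_in (fun r => (u r - gamma) / r) (fun r => 0 < r) 0 0 /\
  exists u1 u2 : R -> R,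
    forall r, 0 < r ->
      derivable_pt_lim u r (u1 r) /\ derivable_pt_lim u1 r (u2 r) /\
      u2 r + (INR N - 1) / r * u1 r
        + INR N * (INR N - 2) / 4 * (A r) ^ 2 * u r
        + Rpower (A r) (- qexp N p) * spow (u r) p = 0.

Definition Lane_Emden_sol (N : nat) (p c : R) (ub : R -> R) : Prop :=
  ub 0 = c /\
  limit1_in (fun r => (ub r - c) / r) (fun r => 0 < r) 0 0 /\
  exists u1 u2 : R -> R,
    forall r, 0 < r ->
      derivable_pt_lim ub r (u1 r) /\ derivable_pt_lim u1 r (u2 r) /\
      u2 r + (INR N - 1) / r * u1 r + rpow (ub r) p = 0.

Definition yfun (N : nat) (p : R) (u : R -> R) (t : R) : R :=
  Rpower 2 (- qexp N p / (p - 1)) * u (exp (mcst N p * t))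
  / (acst N p * exp (- mcst N p * mu p * t)).

Definition yhat (N : nat) (p gamma : R) (u : R -> R) (s : R) : R :=
  yfun N p u (s - ln gamma / (mcst N p * mu p)).

Definition ybar (N : nat) (p : R) (ub : R -> R) (s : R) : R :=
  ub (exp (mcst N p * s)) / (acst N p * exp (- mcst N p * mu p * s)).

(* The rescaling v(x) = c u(lam x) / gamma, lam = gamma^(-(p-1)/2), turns (IVP_gamma) into the
   Lane-Emden equation for ubar up to terms of size O(lam^2) on bounded intervals, and
   yhat, ybar are the same weighted transforms of v, ubar.  For p > p_S the Pohozaev
   identity keeps ubar positive, hence bounded below on (0, e^(m s0)], where u^p is then
   Lipschitz; an energy estimate for v - ubar (Gronwall, closed by continuous induction)
   makes v, v' uniformly close to ubar, ubar' there as gamma -> oo, and this transfers to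
   yhat and its derivative on (-oo, s0]. *)

From Stdlib Require Import Reals Lra Lia Classical FunctionalExtensionality.
Open Scope R_scope.

Lemma derivable_pt_lim_continuity_pt f x l :
  derivable_pt_lim f x l -> continuity_pt f x.
Proof. intro H. apply derivable_continuous_pt. now exists l. Qed.

Lemma continuity_pt_eps f x : continuity_pt f x -> forall eps, 0 < eps ->
  exists d, 0 < d /\ forall y, Rabs (y - x) < d -> Rabs (f y - f x) < eps.
Proof.
  intros H eps Heps. destruct (H eps Heps) as [d [Hd Hy]]. exists d; split; auto.
  intros y Hyx. destruct (Req_dec x y) as [<-|Hne].
  - rewrite Rminus_diag, Rabs_R0; auto.
  - apply (Hy y). repeat split; auto.
Qed.

Lemma derivable_pt_lim_eq f x l l' :
  derivable_pt_lim f x l -> l = l' -> derivable_pt_lim f x l'.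
Proof. now intros H <-. Qed.

Lemma derivable_pt_lim_ext f g x l :
  (forall y, f y = g y) -> derivable_pt_lim f x l -> derivable_pt_lim g x l.
Proof. intro H. replace g with f; auto. now apply functional_extensionality. Qed.

Lemma derivable_pt_lim_mul f g x df dg :
  derivable_pt_lim f x df -> derivable_pt_lim g x dg ->
  derivable_pt_lim (fun t => f t * g t) x (df * g x + f x * dg).
Proof. apply derivable_pt_lim_mult. Qed.

Lemma derivable_pt_lim_add f g x df dg :
  derivable_pt_lim f x df -> derivable_pt_lim g x dg ->
  derivable_pt_lim (fun t => f t + g t) x (df + dg).
Proof. apply derivable_pt_lim_plus. Qed.

Lemma derivable_pt_lim_sub f g x df dg :
  derivable_pt_lim f x df -> derivable_pt_lim g x dg ->
  derivable_pt_lim (fun t => f t - g t) x (df - dg).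
Proof. apply derivable_pt_lim_minus. Qed.

Lemma derivable_pt_lim_cst a x : derivable_pt_lim (fun _ => a) x 0.
Proof. apply derivable_pt_lim_const. Qed.

Lemma derivable_pt_lim_scal a f x df :
  derivable_pt_lim f x df -> derivable_pt_lim (fun t => a * f t) x (a * df).
Proof.
  intro H. eapply derivable_pt_lim_eq.
  - apply (derivable_pt_lim_mul (fun _ => a) f); [apply derivable_pt_lim_cst | exact H].
  - ring.
Qed.

Lemma derivable_pt_lim_compose f g x df dg :
  derivable_pt_lim f x df -> derivable_pt_lim g (f x) dg ->
  derivable_pt_lim (fun t => g (f t)) x (dg * df).
Proof. intros; now apply (derivable_pt_lim_comp f g). Qed.

Lemma derivable_pt_lim_linear a x : derivable_pt_lim (fun t => a * t) x a.
Proof.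
  eapply derivable_pt_lim_eq.
  - apply derivable_pt_lim_scal, derivable_pt_lim_id.
  - ring.
Qed.

Lemma derivable_pt_lim_square f x df :
  derivable_pt_lim f x df -> derivable_pt_lim (fun t => f t * f t) x (2 * f x * df).
Proof. intro H. eapply derivable_pt_lim_eq; [apply derivable_pt_lim_mul; eauto | ring]. Qed.

Lemma derivable_pt_lim_Rpower_comp f x df e :
  0 < f x -> derivable_pt_lim f x df ->
  derivable_pt_lim (fun t => Rpower (f t) e) x (e * Rpower (f x) (e - 1) * df).
Proof.
  intros Hf H. apply (derivable_pt_lim_compose f (fun y => Rpower y e)); auto.
  now apply derivable_pt_lim_power.
Qed.

Lemma MVT_closed f df a b : a <= b ->
  (forall x, a <= x <= b -> derivable_pt_lim f x (df x)) ->
  exists c, a <= c <= b /\ f b - f a = df c * (b - a).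
Proof.
  intros Hab Hd. destruct (Rle_lt_or_eq_dec _ _ Hab) as [Hlt| <-].
  - destruct (MVT_cor2 f df a b Hlt Hd) as [c [He Hc]]. exists c; split; [lra | exact He].
  - exists a. split; [lra | ring].
Qed.

Lemma nonpos_derivative_antitone f df a b : a <= b ->
  (forall x, a <= x <= b -> derivable_pt_lim f x (df x)) ->
  (forall x, a <= x <= b -> df x <= 0) -> f b <= f a.
Proof.
  intros Hab Hd Hn. destruct (MVT_closed f df a b Hab Hd) as [c [Hc He]].
  specialize (Hn c Hc). nra.
Qed.

Lemma neg_derivative_decreasing f df a b : a < b ->
  (forall x, a <= x <= b -> derivable_pt_lim f x (df x)) ->
  (forall x, a <= x <= b -> df x < 0) -> f b < f a.
Proof.
  intros Hab Hd Hn. destruct (MVT_cor2 f df a b Hab Hd) as [c [He Hc]].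
  specialize (Hn c ltac:(lra)). nra.
Qed.

Lemma exp_le_mono x y : x <= y -> exp x <= exp y.
Proof.
  intro H. destruct (Rle_lt_or_eq_dec _ _ H) as [Hlt | ->]; [left; now apply exp_increasing | lra].
Qed.

Lemma rpow_ge0 x e : 0 <= rpow x e.
Proof. unfold rpow. destruct Rlt_dec; [left; apply exp_pos | lra]. Qed.

Lemma rpow_pos_base x e : 0 < x -> rpow x e = Rpower x e.
Proof. intro H. unfold rpow. destruct Rlt_dec; [reflexivity | lra]. Qed.

Lemma pow_le_1 x n : 0 <= x <= 1 -> x ^ n <= 1.
Proof. intro H. rewrite <- (pow1 n). apply pow_incr. lra. Qed.

Lemma INR_mult_pow_pred n y : 0 < y -> INR n * y ^ pred n = INR n * y ^ n / y.
Proof. intro Hy. destruct n as [| k]; simpl; field; lra. Qed.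

Lemma spow_pos x p : 0 < x -> spow x p = Rpower x p.
Proof.
  intro H. unfold spow. rewrite Rabs_right by lra. rewrite rpow_pos_base by exact H.
  replace p with ((p - 1) + 1) at 2 by ring. now rewrite Rpower_plus, Rpower_1.
Qed.

Lemma Rabs_le_inv a b : Rabs a <= b -> - b <= a <= b.
Proof. unfold Rabs; destruct Rcase_abs; lra. Qed.

Lemma Rpower_1_base q : Rpower 1 q = 1.
Proof. unfold Rpower. now rewrite ln_1, Rmult_0_r, exp_0. Qed.

Lemma ln_Rpower x e : ln (Rpower x e) = e * ln x.
Proof. apply ln_exp. Qed.

Ltac solve_pos := repeat match goal with
  | |- 0 < _ * _ => apply Rmult_lt_0_compat
  | |- 0 < / _ => apply Rinv_0_lt_compat
  | |- 0 < Rpower _ _ => apply exp_pos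
  | |- 0 < _ ^ _ => apply pow_lt
  | |- 0 < exp _ => apply exp_pos
  end; try assumption; try lra.

Definition is_little_o_0 (f : R -> R) : Prop :=
  forall eta, 0 < eta -> exists d, 0 < d /\ forall x, 0 < x < d -> Rabs (f x) < eta * x.

Lemma limit1_in_is_little_o_0 (f : R -> R) c :
  limit1_in (fun r => (f r - c) / r) (fun r => 0 < r) 0 0 ->
  is_little_o_0 (fun r => f r - c).
Proof.
  intros H eta Heta. destruct (H eta Heta) as [d [Hd Hx]].
  exists d; split; auto. intros x Hx0.
  assert (Hl : Rabs ((f x - c) / x - 0) < eta).
  { apply (Hx x). split; [lra |]. simpl; unfold R_dist.
    rewrite Rminus_0_r, Rabs_right; lra. }
  rewrite Rminus_0_r in Hl. unfold Rdiv in Hl.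
  rewrite Rabs_mult, Rabs_inv, (Rabs_right x) in Hl by lra.
  apply Rmult_lt_reg_r with (/ x); [apply Rinv_0_lt_compat; lra |].
  rewrite Rmult_assoc, Rinv_r, Rmult_1_r by lra. exact Hl.
Qed.

(* The mean value theorem on [x/2, x] turns [f = o(x)] into a small slope. *)
Lemma is_little_o_0_small_point (f f1 : R -> R) :
  (forall x, 0 < x -> derivable_pt_lim f x (f1 x)) -> is_little_o_0 f ->
  forall eta d0, 0 < eta -> 0 < d0 ->
  exists xi, 0 < xi < d0 /\ Rabs (f xi) < eta /\ Rabs (f1 xi) < eta.
Proof.
  intros Hd Ho eta d0 Heta Hd0.
  destruct (Ho (eta / 4)) as [d [Hdp Hx]]; [lra |].
  set (x := Rmin (Rmin d d0) 1 / 2).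
  assert (Hx1 : 0 < x /\ x < d /\ x < d0 /\ x < 1).
  { unfold x, Rmin; repeat destruct Rle_dec; lra. }
  destruct (MVT_closed f f1 (x / 2) x) as [c [Hc Hmvt]]; [lra | |].
  { intros y Hy. apply Hd. lra. }
  exists c. split; [lra |]. split.
  - specialize (Hx c ltac:(lra)). nra.
  - assert (Hfx := Hx x ltac:(lra)). assert (Hfx2 := Hx (x / 2) ltac:(lra)).
    assert (Rabs (f x - f (x / 2)) < eta / 4 * x + eta / 4 * (x / 2)).
    { unfold Rminus. eapply Rle_lt_trans; [apply Rabs_triang |]. rewrite Rabs_Ropp. lra. }
    rewrite Hmvt, Rabs_mult, (Rabs_right (x - x / 2)) in H by lra.
    nra.
Qed.

Lemma Gronwall (E dE : R -> R) C d2 a b : 0 <= C -> 0 <= d2 -> a <= b ->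
  (forall x, a <= x <= b -> derivable_pt_lim E x (dE x)) ->
  (forall x, a <= x <= b -> dE x <= C * E x + d2) ->
  E b <= (E a + d2 * (b - a)) * exp (C * (b - a)).
Proof.
  intros HC Hd2 Hab HE Hb.
  set (F := fun x => E x * exp (- C * (x - a)) - d2 * (x - a)).
  assert (HF : F b <= F a).
  { apply nonpos_derivative_antitone
      with (fun x => dE x * exp (- C * (x - a)) - C * E x * exp (- C * (x - a)) - d2);
      [exact Hab | |].
    - intros x Hx. unfold F. eapply derivable_pt_lim_eq.
      + apply derivable_pt_lim_sub.
        * apply (derivable_pt_lim_mul E (fun t => exp (- C * (t - a)))); [now apply HE |].
          apply (derivable_pt_lim_compose (fun t => - C * (t - a)) exp);
            [| apply derivable_pt_lim_exp].
          apply derivable_pt_lim_scal, derivable_pt_lim_sub;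
            [apply derivable_pt_lim_id | apply derivable_pt_lim_cst].
        * apply derivable_pt_lim_scal, derivable_pt_lim_sub;
            [apply derivable_pt_lim_id | apply derivable_pt_lim_cst].
      + ring.
    - intros x Hx. assert (Hexp : 0 < exp (- C * (x - a)) <= 1).
      { split; [apply exp_pos |]. rewrite <- exp_0. apply exp_le_mono. nra. }
      specialize (Hb x Hx). nra. }
  unfold F in HF. rewrite Rminus_diag, Rmult_0_r, exp_0 in HF.
  replace (E b) with (E b * exp (- C * (b - a)) * exp (C * (b - a))).
  - apply Rmult_le_compat_r; [left; apply exp_pos | lra].
  - rewrite Rmult_assoc, <- exp_plus. replace (- C * (b - a) + C * (b - a)) with 0 by ring.
    rewrite exp_0; ring.
Qed.

Lemma is_little_o_0_sub f g :
  is_little_o_0 f -> is_little_o_0 g -> is_little_o_0 (fun x => f x - g x).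
Proof.
  intros Hf Hg eta Heta.
  destruct (Hf (eta / 2)) as [d1 [Hd1 H1]]; [lra |].
  destruct (Hg (eta / 2)) as [d2 [Hd2 H2]]; [lra |].
  exists (Rmin d1 d2). split; [now apply Rmin_pos |]. intros x Hx.
  assert (x < d1 /\ x < d2) by (revert Hx; unfold Rmin; destruct Rle_dec; lra).
  specialize (H1 x ltac:(lra)). specialize (H2 x ltac:(lra)).
  unfold Rminus at 1. eapply Rle_lt_trans; [apply Rabs_triang |]. rewrite Rabs_Ropp. lra.
Qed.

Lemma is_little_o_0_ext f g : (forall x, 0 < x -> f x = g x) ->
  is_little_o_0 f -> is_little_o_0 g.
Proof.
  intros Hfg Hf eta Heta. destruct (Hf eta Heta) as [d [Hd H]].
  exists d. split; [exact Hd |]. intros x Hx. rewrite <- Hfg by lra. now apply H.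
Qed.

Lemma is_little_o_0_rescale f k lam : 0 < lam -> is_little_o_0 f ->
  is_little_o_0 (fun x => k * f (lam * x)).
Proof.
  intros Hlam Hf eta Heta.
  destruct (Hf (eta / (lam * (Rabs k + 1)))) as [d [Hd H]].
  { pose proof (Rabs_pos k). apply Rdiv_lt_0_compat; [lra | apply Rmult_lt_0_compat; lra]. }
  exists (d / lam). split; [apply Rdiv_lt_0_compat; lra |]. intros x Hx.
  assert (Hlx : 0 < lam * x < d).
  { split; [apply Rmult_lt_0_compat; lra |].
    replace d with (lam * (d / lam)) by (field; lra).
    apply Rmult_lt_compat_l; lra. }
  specialize (H (lam * x) Hlx). rewrite Rabs_mult. pose proof (Rabs_pos k).
  apply Rle_lt_trans with (Rabs k * (eta / (lam * (Rabs k + 1)) * (lam * x))).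
  - apply Rmult_le_compat_l; lra.
  - replace (Rabs k * (eta / (lam * (Rabs k + 1)) * (lam * x)))
      with (eta * x * (Rabs k / (Rabs k + 1))) by (field; lra).
    assert (Rabs k / (Rabs k + 1) < 1).
    { apply Rmult_lt_reg_r with (Rabs k + 1); [lra |]. unfold Rdiv.
      rewrite Rmult_assoc, Rinv_l by lra. lra. }
    assert (0 < eta * x) by (apply Rmult_lt_0_compat; lra). nra.
Qed.

Lemma continuity_pt_lt_nearby f x B : continuity_pt f x -> f x < B ->
  exists d, 0 < d /\ forall y, Rabs (y - x) < d -> f y < B.
Proof.
  intros Hf HB. destruct (continuity_pt_eps f x Hf (B - f x)) as [d [Hd Hy]]; [lra |].
  exists d. split; [exact Hd |]. intros y Hyx. specialize (Hy y Hyx).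
  apply Rabs_def2 in Hy. lra.
Qed.

Lemma continuity_pt_Rabs f x : continuity_pt f x -> continuity_pt (fun y => Rabs (f y)) x.
Proof. intro Hf. apply (continuity_pt_comp f Rabs); [exact Hf | apply Rcontinuity_abs]. Qed.

(* Continuous induction. *)
Lemma abs_bound_bootstrap (w : R -> R) a b B B' :
  a <= b -> B' < B -> Rabs (w a) < B ->
  (forall x, a <= x <= b -> continuity_pt w x) ->
  (forall y, a <= y <= b -> (forall z, a <= z <= y -> Rabs (w z) < B) ->
     Rabs (w y) <= B') ->
  forall x, a <= x <= b -> Rabs (w x) <= B'.
Proof.
  intros Hab HB Ha Hcont Hapriori.
  set (S := fun x => a <= x <= b /\ forall z, a <= z <= x -> Rabs (w z) < B).
  assert (Sa : S a).
  { split; [lra |]. intros z Hz. now replace z with a by lra. }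
  destruct (completeness S) as [sg [Hsup Hleast]];
    [exists b; intros x Hx; apply Hx | now exists a |].
  assert (Hsg : a <= sg <= b) by (split; [now apply Hsup | apply Hleast; intros x Hx; apply Hx]).
  assert (Hbelow : forall y, a <= y < sg -> forall z, a <= z <= y -> Rabs (w z) < B).
  { intros y Hy z Hz. destruct (classic (exists x, S x /\ y < x)) as [[x [Sx Hx]] | Hn].
    - apply (proj2 Sx). lra.
    - exfalso. assert (sg <= y); [| lra]. apply Hleast. intros x Sx.
      destruct (Rle_or_lt x y); auto. exfalso; apply Hn; now exists x. }
  assert (Hcabs : forall x, a <= x <= b -> continuity_pt (fun y => Rabs (w y)) x)
    by (intros x Hx; now apply continuity_pt_Rabs, Hcont).
  assert (Hwsg : Rabs (w sg) < B).
  { destruct (Rle_lt_or_eq_dec _ _ (proj1 Hsg)) as [Hlt | <-]; [| exact Ha].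
    destruct (Rle_or_lt (Rabs (w sg)) B') as [| Hgt]; [lra | exfalso].
    destruct (continuity_pt_lt_nearby (fun y => - Rabs (w y)) sg (- B')) as [d [Hd Hnear]];
      [apply continuity_pt_opp, Hcabs, Hsg | lra |].
    set (y := sg - Rmin d (sg - a) / 2).
    assert (Hy : a <= y < sg /\ Rabs (y - sg) < d).
    { unfold y, Rmin; destruct Rle_dec; split; try split; try rewrite Rabs_left; lra. }
    specialize (Hnear y (proj2 Hy)).
    assert (Rabs (w y) <= B') by (apply Hapriori; [lra | apply (Hbelow y (proj1 Hy))]).
    lra. }
  assert (Hupto : forall z, a <= z <= sg -> Rabs (w z) < B).
  { intros z Hz. destruct (Rle_lt_or_eq_dec _ _ (proj2 Hz)) as [Hlt | ->]; [| exact Hwsg].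
    now apply (Hbelow z). }
  assert (Hsgb : sg = b).
  { destruct (Rle_lt_or_eq_dec _ _ (proj2 Hsg)) as [Hlt |]; auto. exfalso.
    destruct (continuity_pt_lt_nearby _ sg B (Hcabs sg Hsg) Hwsg) as [d [Hd Hnear]].
    set (x := Rmin (sg + d / 2) b).
    assert (Hx : sg < x <= b /\ x <= sg + d / 2) by (unfold x, Rmin; destruct Rle_dec; lra).
    assert (S x).
    { split; [lra |]. intros z Hz. destruct (Rle_or_lt z sg); [apply Hupto; lra |].
      apply Hnear. rewrite Rabs_right; lra. }
    assert (x <= sg) by now apply Hsup. lra. }
  subst sg. intros x Hx. apply Hapriori; auto. intros z Hz. apply Hupto. lra.
Qed.

Lemma antitone_first_zero f r1 :
  0 < r1 -> (forall x y, 0 < x <= y -> f y <= f x) ->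
  (forall x, 0 < x -> continuity_pt f x) ->
  (exists x0, 0 < x0 /\ 0 < f x0) -> f r1 <= 0 ->
  exists R0, 0 < R0 <= r1 /\ f R0 = 0 /\ forall y, 0 < y < R0 -> 0 < f y.
Proof.
  intros Hr1 Hanti Hcont [x0 [Hx0 Hfx0]] Hfr1.
  set (S := fun x => 0 < x /\ 0 < f x).
  assert (Hbound : forall x, S x -> x <= r1).
  { intros x [Hx Hfx]. destruct (Rle_or_lt x r1); auto.
    assert (f x <= f r1) by (apply Hanti; lra). lra. }
  destruct (completeness S) as [R0 [Hsup Hleast]]; [now exists r1 | now exists x0 |].
  assert (HR0 : x0 <= R0 <= r1) by (split; [apply Hsup; now split | now apply Hleast]).
  assert (Hpos : forall y, 0 < y < R0 -> 0 < f y).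
  { intros y Hy. destruct (Rlt_or_le 0 (f y)) as [| Hfy]; auto. exfalso.
    assert (R0 <= y); [| lra]. apply Hleast. intros x [Hx Hfx].
    destruct (Rle_or_lt x y); auto. assert (f x <= f y) by (apply Hanti; lra). lra. }
  exists R0. split; [lra |]. split; [| exact Hpos].
  destruct (Rtotal_order (f R0) 0) as [Hneg | [Hz | Hgt]]; auto; exfalso.
  - destruct (continuity_pt_lt_nearby f R0 0 (Hcont R0 ltac:(lra)) Hneg) as [d [Hd Hnear]].
    set (y := R0 - Rmin d R0 / 2).
    assert (Hy : 0 < y < R0 /\ Rabs (y - R0) < d).
    { unfold y, Rmin; destruct Rle_dec; split; try split; try rewrite Rabs_left; lra. }
    specialize (Hnear y (proj2 Hy)). specialize (Hpos y (proj1 Hy)). lra.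
  - destruct (continuity_pt_lt_nearby (fun y => - f y) R0 0) as [d [Hd Hnear]];
      [apply continuity_pt_opp, Hcont; lra | lra |].
    specialize (Hnear (R0 + d / 2) ltac:(rewrite Rabs_right; lra)).
    assert (R0 + d / 2 <= R0) by (apply Hsup; split; lra). lra.
Qed.

Lemma Rpower_lipschitz p lo hi : 1 <= p -> 0 < lo ->
  forall x y, lo <= x <= hi -> lo <= y <= hi ->
  Rabs (Rpower x p - Rpower y p) <= p * Rpower hi (p - 1) * Rabs (x - y).
Proof.
  intros Hp Hlo.
  assert (Hle : forall x y, lo <= x <= hi -> lo <= y <= hi -> x <= y ->
    Rabs (Rpower x p - Rpower y p) <= p * Rpower hi (p - 1) * Rabs (x - y)).
  { intros x y Hx Hy Hxy.
    destruct (MVT_closed (fun t => Rpower t p) (fun t => p * Rpower t (p - 1)) x y Hxy)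
      as [z [Hz Hmvt]].
    { intros t Ht. apply derivable_pt_lim_power. lra. }
    rewrite (Rabs_minus_sym (Rpower x p)), Hmvt, (Rabs_minus_sym x y), Rabs_mult.
    apply Rmult_le_compat_r; [apply Rabs_pos |].
    rewrite Rabs_right.
    - apply Rmult_le_compat_l; [lra |]. apply Rle_Rpower_l; lra.
    - apply Rle_ge, Rmult_le_pos; [lra | left; apply exp_pos]. }
  intros x y Hx Hy. destruct (Rle_or_lt x y); [now apply Hle |].
  rewrite Rabs_minus_sym, (Rabs_minus_sym x y). apply Hle; auto; lra.
Qed.

(* [Rpower] is [1] at nonpositive bases, so this is the Pohozaev functional only where
   [ub > 0]. *)
Definition Pohozaev (n : nat) (p : R) (ub ub1 : R -> R) (x : R) : R :=
  x ^ S n * (ub1 x * ub1 x) / 2 + x ^ S n * Rpower (ub x) (p + 1) / (p + 1)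
  + (INR n - 1) / 2 * (x ^ n * ub x * ub1 x).

Section Lane_Emden.

(* [n] stands for [N - 1]. *)
Variables (n : nat) (p c : R) (ub ub1 ub2 : R -> R).
Hypothesis ub_flat : is_little_o_0 (fun x => ub x - c).
Hypothesis ub_ode : forall r, 0 < r ->
  derivable_pt_lim ub r (ub1 r) /\ derivable_pt_lim ub1 r (ub2 r) /\
  ub2 r + INR n / r * ub1 r + rpow (ub r) p = 0.

Lemma Lane_Emden_small_point eta d0 : 0 < eta -> 0 < d0 ->
  exists xi, 0 < xi < d0 /\ Rabs (ub xi - c) < eta /\ Rabs (ub1 xi) < eta.
Proof.
  apply (is_little_o_0_small_point (fun x => ub x - c) ub1); auto.
  intros x Hx. eapply derivable_pt_lim_eq.
  - apply derivable_pt_lim_sub; [apply ub_ode; auto | apply derivable_pt_lim_cst].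
  - ring.
Qed.

(* [r^n ub'(r)] is nonincreasing and tends to [0] at [0]. *)
Lemma Lane_Emden_derivative_nonpos r : 0 < r -> ub1 r <= 0.
Proof.
  intros Hr.
  set (Q := fun y => y ^ n * ub1 y).
  assert (HQ : forall y, 0 < y -> derivable_pt_lim Q y (- (y ^ n * rpow (ub y) p))).
  { intros y Hy. destruct (ub_ode y Hy) as [_ [Hd2 Hode]]. eapply derivable_pt_lim_eq.
    - apply derivable_pt_lim_mul; [apply derivable_pt_lim_pow | exact Hd2].
    - rewrite INR_mult_pow_pred by lra.
      replace (ub2 y) with (- (INR n / y * ub1 y + rpow (ub y) p)) by lra.
      field. lra. }
  destruct (Rle_or_lt (ub1 r) 0) as [| Hpos]; auto. exfalso.
  assert (HQr : 0 < Q r) by (apply Rmult_lt_0_compat; auto; now apply pow_lt).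
  destruct (Lane_Emden_small_point (Q r) (Rmin r 1)) as [xi [Hxi [_ Hxi1]]];
    [exact HQr | apply Rmin_pos; lra |].
  assert (Hxr : xi < r /\ xi < 1) by (revert Hxi; unfold Rmin; destruct Rle_dec; lra).
  assert (Q r <= Q xi).
  { apply nonpos_derivative_antitone with (fun y => - (y ^ n * rpow (ub y) p)); [lra | |].
    - intros y Hy. apply HQ. lra.
    - intros y Hy. assert (0 <= y ^ n * rpow (ub y) p); [| lra].
      apply Rmult_le_pos; [apply pow_le; lra | apply rpow_ge0]. }
  assert (Q xi <= Rabs (ub1 xi)).
  { unfold Q. assert (0 < xi ^ n <= 1) by (split; [apply pow_lt | apply pow_le_1]; lra).
    eapply Rle_trans; [apply Rle_abs |]. rewrite Rabs_mult, (Rabs_right (xi ^ n)) by lra.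
    pose proof (Rabs_pos (ub1 xi)). nra. }
  lra.
Qed.

Lemma Lane_Emden_antitone x y : 0 < x -> x <= y -> ub y <= ub x.
Proof.
  intros Hx Hxy. apply nonpos_derivative_antitone with ub1; auto.
  - intros z Hz. apply ub_ode. lra.
  - intros z Hz. apply Lane_Emden_derivative_nonpos. lra.
Qed.

Lemma Lane_Emden_le_init r : 0 < r -> ub r <= c.
Proof.
  intros Hr. destruct (Rle_or_lt (ub r) c) as [| Hc]; auto. exfalso.
  destruct (ub_flat ((ub r - c) / (2 * r))) as [d [Hd Hx]]; [apply Rdiv_lt_0_compat; lra |].
  set (x := Rmin d r / 2).
  assert (Hx0 : 0 < x < d /\ x < r) by (unfold x, Rmin; destruct Rle_dec; lra).
  specialize (Hx x (proj1 Hx0)). apply Rabs_def2 in Hx.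
  assert (ub r <= ub x) by (apply Lane_Emden_antitone; lra).
  assert ((ub r - c) / (2 * r) * x < (ub r - c) / 2).
  { apply Rmult_lt_reg_r with (2 * r); [lra |].
    field_simplify; [| lra]. nra. }
  lra.
Qed.

Hypothesis p_gt1 : 1 < p.

Lemma Pohozaev_derivative y : 0 < y -> 0 < ub y ->
  derivable_pt_lim (Pohozaev n p ub ub1) y
    (y ^ n * Rpower (ub y) (p + 1) * ((INR n + 1) / (p + 1) - (INR n - 1) / 2)).
Proof.
  intros Hy Hu. destruct (ub_ode y Hy) as [Hd1 [Hd2 Hode]].
  unfold Pohozaev. eapply derivable_pt_lim_eq.
  - apply derivable_pt_lim_add; [apply derivable_pt_lim_add |].
    + apply (derivable_pt_lim_mul (fun x => x ^ S n * (ub1 x * ub1 x)) (fun _ => / 2)).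
      * apply derivable_pt_lim_mul;
          [apply derivable_pt_lim_pow | apply derivable_pt_lim_square, Hd2].
      * apply derivable_pt_lim_cst.
    + apply (derivable_pt_lim_mul (fun x => x ^ S n * Rpower (ub x) (p + 1)) (fun _ => / (p + 1))).
      * apply derivable_pt_lim_mul; [apply derivable_pt_lim_pow |].
        apply derivable_pt_lim_Rpower_comp; [exact Hu | exact Hd1].
      * apply derivable_pt_lim_cst.
    + apply derivable_pt_lim_scal.
      apply derivable_pt_lim_mul; [apply derivable_pt_lim_mul |].
      * apply derivable_pt_lim_pow.
      * exact Hd1.
      * exact Hd2.
  - rewrite rpow_pos_base in Hode by exact Hu.
    replace (p + 1 - 1) with p by ring.
    replace (Rpower (ub y) (p + 1)) with (Rpower (ub y) p * ub y)
      by (rewrite Rpower_plus, Rpower_1; auto).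
    replace (ub2 y) with (- (INR n / y * ub1 y + Rpower (ub y) p)) by lra.
    rewrite !INR_mult_pow_pred by lra. simpl pred. rewrite S_INR.
    change (y ^ S n) with (y * y ^ n). field. split; lra.
Qed.

Hypothesis c_pos : 0 < c.

Lemma Pohozaev_small_near_origin eps d0 : 0 < eps -> 0 < d0 ->
  exists xi, 0 < xi < d0 /\ Pohozaev n p ub ub1 xi < eps.
Proof.
  intros Heps Hd0.
  set (F := Rpower (c + 1) (p + 1) / (p + 1)).
  assert (HF : 0 < F) by (apply Rdiv_lt_0_compat; [apply exp_pos | lra]).
  set (Kt := Rabs ((INR n - 1) / 2) * (c + 1)).
  assert (HKt : 0 <= Kt) by (apply Rmult_le_pos; [apply Rabs_pos | lra]).
  set (eta := Rmin (Rmin 1 (c / 2)) (eps / (4 * (1 + Kt)))).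
  assert (Heta : 0 < eta /\ eta <= 1 /\ eta <= c / 2 /\ eta * (1 + Kt) <= eps / 4).
  { assert (Hq : 0 < eps / (4 * (1 + Kt))) by (apply Rdiv_lt_0_compat; lra).
    assert (eps / (4 * (1 + Kt)) * (1 + Kt) = eps / 4) by (field; lra).
    assert (eta <= eps / (4 * (1 + Kt))) by apply Rmin_r.
    unfold eta in *. revert Hq. unfold Rmin; repeat destruct Rle_dec; intros; nra. }
  destruct (Lane_Emden_small_point eta (Rmin (Rmin d0 1) (eps / (4 * F))))
    as [xi [Hxi [Hxiu Hxiu1]]]; [lra | repeat apply Rmin_pos; try apply Rdiv_lt_0_compat; lra |].
  assert (Hxi2 : xi < d0 /\ xi < 1 /\ xi * F < eps / 4).
  { assert (Hq : xi < eps / (4 * F)) by (revert Hxi; unfold Rmin; repeat destruct Rle_dec; lra).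
    apply (Rmult_lt_compat_r F) in Hq; [| lra].
    replace (eps / (4 * F) * F) with (eps / 4) in Hq by (field; lra).
    revert Hxi; unfold Rmin; repeat destruct Rle_dec; lra. }
  exists xi. split; [lra |]. unfold Pohozaev.
  apply Rabs_def2 in Hxiu.
  assert (Hpow : 0 <= xi ^ S n <= xi /\ 0 <= xi ^ n <= 1).
  { assert (0 <= xi ^ n <= 1) by (split; [apply pow_le | apply pow_le_1]; lra).
    change (xi ^ S n) with (xi * xi ^ n). split; [split |]; nra. }
  apply Rabs_def2 in Hxiu1.
  assert (T1 : xi ^ S n * (ub1 xi * ub1 xi) / 2 <= eta / 2).
  { assert (ub1 xi * ub1 xi <= 1) by nra. nra. }
  assert (T2 : xi ^ S n * Rpower (ub xi) (p + 1) / (p + 1) <= xi * F).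
  { assert (Rpower (ub xi) (p + 1) / (p + 1) <= F).
    { apply Rmult_le_compat_r; [left; apply Rinv_0_lt_compat; lra |].
      apply Rle_Rpower_l; lra. }
    assert (0 <= Rpower (ub xi) (p + 1) / (p + 1))
      by (apply Rmult_le_pos; [left; apply exp_pos | left; apply Rinv_0_lt_compat; lra]).
    unfold Rdiv in *. rewrite Rmult_assoc. nra. }
  assert (T3 : (INR n - 1) / 2 * (xi ^ n * ub xi * ub1 xi) <= Kt * eta).
  { eapply Rle_trans; [apply Rle_abs |]. unfold Kt.
    rewrite !Rabs_mult, (Rmult_assoc _ (c + 1)). apply Rmult_le_compat_l; [apply Rabs_pos |].
    rewrite (Rabs_right (xi ^ n)) by lra.
    assert (Rabs (ub xi) <= c + 1) by (apply Rabs_le; lra).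
    assert (Rabs (ub1 xi) <= eta) by (apply Rabs_le; lra).
    pose proof (Rabs_pos (ub xi)). pose proof (Rabs_pos (ub1 xi)).
    assert (Rabs (ub xi) * Rabs (ub1 xi) <= (c + 1) * eta) by (apply Rmult_le_compat; lra).
    rewrite Rmult_assoc. pose proof (Rmult_le_pos _ _ (Rabs_pos (ub xi)) (Rabs_pos (ub1 xi))).
    nra. }
  lra.
Qed.

Lemma Pohozaev_nonneg_near_root R0 : 0 < R0 -> ub R0 = 0 ->
  forall eps, 0 < eps -> exists x, R0 / 2 < x < R0 /\ - eps < Pohozaev n p ub ub1 x.
Proof.
  intros HR0 Hz eps Heps.
  set (T := fun x => x ^ n * ub x * ub1 x).
  set (k := Rabs ((INR n - 1) / 2)).
  destruct (ub_ode R0 HR0) as [Hd1 [Hd2 _]].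
  assert (HT : continuity_pt T R0).
  { eapply derivable_pt_lim_continuity_pt, derivable_pt_lim_mul;
      [apply derivable_pt_lim_mul; [apply derivable_pt_lim_pow | exact Hd1] | exact Hd2]. }
  destruct (continuity_pt_eps T R0 HT (eps / (k + 1))) as [a [Ha Hclose]].
  { apply Rdiv_lt_0_compat; [lra |]. pose proof (Rabs_pos ((INR n - 1) / 2)). unfold k; lra. }
  set (x := R0 - Rmin a (R0 / 2) / 2).
  assert (Hx : R0 / 2 < x < R0 /\ Rabs (x - R0) < a).
  { unfold x, Rmin; destruct Rle_dec; split; try split; try rewrite Rabs_left; lra. }
  exists x. split; [apply Hx |].
  specialize (Hclose x (proj2 Hx)). unfold T at 2 in Hclose.
  rewrite Hz, Rmult_0_r, Rmult_0_l, Rminus_0_r in Hclose.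
  assert (Hk : 0 <= k) by apply Rabs_pos.
  assert (HTx : - eps < (INR n - 1) / 2 * T x).
  { assert (k * Rabs (T x) <= k * (eps / (k + 1))) by (apply Rmult_le_compat_l; lra).
    assert (k * (eps / (k + 1)) < eps).
    { apply Rmult_lt_reg_r with (k + 1); [lra |].
      replace (k * (eps / (k + 1)) * (k + 1)) with (k * eps) by (field; lra). nra. }
    assert (- (k * Rabs (T x)) <= (INR n - 1) / 2 * T x); [| lra].
    unfold k. rewrite <- Rabs_mult, <- Rabs_Ropp. apply Ropp_le_cancel.
    rewrite Ropp_involutive. apply Rle_abs. }
  assert (Hx0 : 0 < x) by lra.
  assert (0 <= x ^ S n * (ub1 x * ub1 x) / 2).
  { apply Rmult_le_pos; [apply Rmult_le_pos; [apply pow_le; lra | apply Rle_0_sqr] | lra]. }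
  assert (0 <= x ^ S n * Rpower (ub x) (p + 1) / (p + 1)).
  { apply Rmult_le_pos; [apply Rmult_le_pos; [apply pow_le; lra | left; apply exp_pos] |].
    left; apply Rinv_0_lt_compat; lra. }
  unfold Pohozaev. fold (T x). lra.
Qed.

Hypothesis supercritical : (INR n + 1) / (p + 1) < (INR n - 1) / 2.

(* The Pohozaev functional decreases strictly while [ub > 0]; it starts at [0] and would
   end at a nonnegative value at a first zero of [ub]. *)
Lemma Lane_Emden_pos r : 0 < r -> 0 < ub r.
Proof.
  intros Hr. destruct (Rlt_or_le 0 (ub r)) as [| Hneg]; auto. exfalso.
  destruct (antitone_first_zero ub r Hr) as [R0 [HR0 [Hz Hpos]]]; auto.
  - intros x y Hxy. apply Lane_Emden_antitone; lra.
  - intros x Hx. eapply derivable_pt_lim_continuity_pt, ub_ode, Hx.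
  - destruct (ub_flat 1 Rlt_0_1) as [d [Hd Hclose]].
    exists (Rmin d c / 2). assert (0 < Rmin d c / 2 < d /\ Rmin d c / 2 <= c / 2)
      by (unfold Rmin; destruct Rle_dec; lra).
    split; [lra |]. specialize (Hclose (Rmin d c / 2) ltac:(lra)).
    apply Rabs_def2 in Hclose. lra.
  - set (P := Pohozaev n p ub ub1).
    set (kappa := (INR n + 1) / (p + 1) - (INR n - 1) / 2).
    assert (HP : forall y, 0 < y < R0 ->
              derivable_pt_lim P y (y ^ n * Rpower (ub y) (p + 1) * kappa)).
    { intros y Hy. apply Pohozaev_derivative; [lra | now apply Hpos]. }
    assert (HPneg : forall y, 0 < y < R0 -> y ^ n * Rpower (ub y) (p + 1) * kappa < 0).
    { intros y Hy. assert (0 < y ^ n * Rpower (ub y) (p + 1))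
        by (apply Rmult_lt_0_compat; [apply pow_lt; lra | apply exp_pos]).
      unfold kappa. nra. }
    assert (Hdecr : forall a b, 0 < a <= b -> b < R0 -> P b <= P a).
    { intros a b Hab HbR0. apply nonpos_derivative_antitone
        with (fun y => y ^ n * Rpower (ub y) (p + 1) * kappa); [lra | |].
      - intros y Hy. apply HP. lra.
      - intros y Hy. left. apply HPneg. lra. }
    set (gap := P (R0 / 4) - P (R0 / 2)).
    assert (Hgap : 0 < gap).
    { unfold gap. assert (P (R0 / 2) < P (R0 / 4)); [| lra].
      apply neg_derivative_decreasing with (fun y => y ^ n * Rpower (ub y) (p + 1) * kappa);
        [lra | intros y Hy; apply HP; lra | intros y Hy; apply HPneg; lra]. }
    destruct (Pohozaev_small_near_origin (gap / 2) (R0 / 4)) as [xi [Hxi HPxi]]; [lra | lra |].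
    destruct (Pohozaev_nonneg_near_root R0 ltac:(lra) Hz (gap / 2)) as [x [Hx HPx]]; [lra |].
    assert (P (R0 / 4) <= P xi) by (apply Hdecr; lra).
    assert (P x <= P (R0 / 2)) by (apply Hdecr; lra).
    unfold gap in *. fold P in HPxi, HPx. lra.
Qed.

End Lane_Emden.

(* [w] is the difference of two solutions, [w1 = w'] and [g - k/x w1 = w1'];
   the damping term [- k/x w1^2] has the good sign. *)
Lemma energy_derivative_bound w w1 g k d L x : 0 <= k -> 0 < x -> 0 <= L -> 0 <= d ->
  Rabs g <= d + L * Rabs w ->
  2 * w * w1 + 2 * w1 * (g - k / x * w1) <= (L + 2) * (w * w + w1 * w1) + d * d.
Proof.
  intros Hk Hx HL Hd Hg.
  assert (0 <= k / x * (w1 * w1)).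
  { apply Rmult_le_pos; [apply Rmult_le_pos; [lra | left; apply Rinv_0_lt_compat; lra] |].
    apply Rle_0_sqr. }
  assert (w1 * g <= Rabs w1 * (d + L * Rabs w)).
  { eapply Rle_trans; [apply Rle_abs |]. rewrite Rabs_mult.
    apply Rmult_le_compat_l; [apply Rabs_pos | exact Hg]. }
  assert (w * w1 <= Rabs w * Rabs w1) by (rewrite <- Rabs_mult; apply Rle_abs).
  assert (Hsq : forall y, y * y = Rabs y * Rabs y).
  { intro y. rewrite <- Rabs_mult. symmetry. apply Rabs_right, Rle_ge, Rle_0_sqr. }
  rewrite (Hsq w), (Hsq w1).
  pose proof (Rabs_pos w). pose proof (Rabs_pos w1).
  pose proof (Rle_0_sqr (Rabs w - Rabs w1)). pose proof (Rle_0_sqr (Rabs w1 - d)).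
  assert (0 <= L * ((Rabs w1 - Rabs w) * (Rabs w1 - Rabs w)))
    by (apply Rmult_le_pos; [lra | apply Rle_0_sqr]).
  unfold Rsqr in *. nra.
Qed.

Definition energy (v v1 ub ub1 : R -> R) (x : R) : R :=
  (v x - ub x) * (v x - ub x) + (v1 x - ub1 x) * (v1 x - ub1 x).

Lemma energy_nonneg v v1 ub ub1 x : 0 <= energy v v1 ub ub1 x.
Proof.
  unfold energy. pose proof (Rle_0_sqr (v x - ub x)). pose proof (Rle_0_sqr (v1 x - ub1 x)).
  unfold Rsqr in *. lra.
Qed.

Lemma Rabs_le_sqrt_energy v v1 ub ub1 x : Rabs (v x - ub x) <= sqrt (energy v v1 ub ub1 x).
Proof.
  rewrite <- sqrt_Rsqr_abs. apply sqrt_le_1_alt.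
  unfold energy, Rsqr. pose proof (Rle_0_sqr (v1 x - ub1 x)). unfold Rsqr in *. lra.
Qed.

Section Energy_comparison.

Variables (k Rb b L d : R) (v v1 v2 ub ub1 ub2 : R -> R).
Hypotheses (k_ge0 : 0 <= k) (b_pos : 0 < b) (L_ge0 : 0 <= L) (d_ge0 : 0 <= d).
Hypothesis derivs : forall x, 0 < x ->
  derivable_pt_lim v x (v1 x) /\ derivable_pt_lim v1 x (v2 x) /\
  derivable_pt_lim ub x (ub1 x) /\ derivable_pt_lim ub1 x (ub2 x).
Hypothesis residual : forall x, 0 < x <= Rb -> Rabs (v x - ub x) < b ->
  Rabs ((v2 x + k / x * v1 x) - (ub2 x + k / x * ub1 x)) <= d + L * Rabs (v x - ub x).

Lemma difference_derivative x : 0 < x ->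
  derivable_pt_lim (fun y => v y - ub y) x (v1 x - ub1 x).
Proof. intro Hx. destruct (derivs x Hx) as [? [? [? ?]]]. now apply derivable_pt_lim_sub. Qed.

Lemma energy_derivative x : 0 < x -> derivable_pt_lim (energy v v1 ub ub1) x
  (2 * (v x - ub x) * (v1 x - ub1 x) + 2 * (v1 x - ub1 x) * (v2 x - ub2 x)).
Proof.
  intro Hx. destruct (derivs x Hx) as [? [? [? ?]]]. unfold energy.
  apply (derivable_pt_lim_add (fun y => (v y - ub y) * (v y - ub y)));
    apply (derivable_pt_lim_square (fun y => _ y - _ y));
    [now apply difference_derivative | now apply derivable_pt_lim_sub].
Qed.

Lemma energy_derivative_le x : 0 < x <= Rb -> Rabs (v x - ub x) < b ->
  2 * (v x - ub x) * (v1 x - ub1 x) + 2 * (v1 x - ub1 x) * (v2 x - ub2 x)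
  <= (L + 2) * energy v v1 ub ub1 x + d * d.
Proof.
  intros Hx Hw. unfold energy.
  replace (v2 x - ub2 x)
    with ((v2 x + k / x * v1 x) - (ub2 x + k / x * ub1 x) - k / x * (v1 x - ub1 x)) by ring.
  apply energy_derivative_bound; try lra. now apply residual.
Qed.

(* Gronwall bounds the energy as long as [|v - ub| < b], and the bound keeps it there. *)
Lemma energy_comparison_from a rs : 0 < a <= rs -> rs <= Rb ->
  (energy v v1 ub ub1 a + d * d * Rb) * exp ((L + 2) * Rb) < b * b ->
  energy v v1 ub ub1 rs <= (energy v v1 ub ub1 a + d * d * Rb) * exp ((L + 2) * Rb).
Proof.
  intros Har HrsRb Hsmall.
  set (E := energy v v1 ub ub1).
  set (Th := (E a + d * d * Rb) * exp ((L + 2) * Rb)).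
  assert (HE0 : forall x, 0 <= E x) by (intro x; apply energy_nonneg).
  assert (Hdd : 0 <= d * d * Rb) by (apply Rmult_le_pos; [apply Rle_0_sqr | lra]).
  assert (Hgr : forall y, a <= y <= rs ->
            (forall z, a <= z <= y -> Rabs (v z - ub z) < b) -> E y <= Th).
  { intros y Hy Hwy. eapply Rle_trans.
    - apply (Gronwall E (fun x => 2 * (v x - ub x) * (v1 x - ub1 x)
                                 + 2 * (v1 x - ub1 x) * (v2 x - ub2 x)) (L + 2) (d * d) a y);
        [lra | apply Rle_0_sqr | lra | |].
      + intros x Hx. apply energy_derivative. lra.
      + intros x Hx. apply energy_derivative_le; [lra | now apply Hwy].
    - pose proof (Rle_0_sqr d). pose proof (HE0 a). unfold Rsqr in *.
      apply Rmult_le_compat; [nra | left; apply exp_pos | nra |].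
      apply exp_le_mono. nra. }
  assert (Hroot : sqrt Th < b).
  { rewrite <- (sqrt_square b) by lra. apply sqrt_lt_1_alt. split; [| exact Hsmall].
    pose proof (HE0 a). apply Rmult_le_pos; [lra | left; apply exp_pos]. }
  assert (Hwa : Rabs (v a - ub a) < b).
  { eapply Rle_lt_trans; [apply (Rabs_le_sqrt_energy v v1 ub ub1) |].
    eapply Rle_lt_trans; [apply sqrt_le_1_alt | exact Hroot].
    assert (1 <= exp ((L + 2) * Rb)) by (rewrite <- exp_0; apply exp_le_mono; nra).
    pose proof (HE0 a). change (energy v v1 ub ub1 a) with (E a). unfold Th.
    assert (0 <= (E a + d * d * Rb) * (exp ((L + 2) * Rb) - 1))
      by (apply Rmult_le_pos; lra).
    nra. }
  assert (Hboot : forall x, a <= x <= rs -> Rabs (v x - ub x) <= sqrt Th).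
  { apply (abs_bound_bootstrap (fun x => v x - ub x) a rs b); try lra.
    - intros x Hx. apply derivable_pt_lim_continuity_pt with (v1 x - ub1 x).
      apply difference_derivative. lra.
    - intros y Hy Hwy. eapply Rle_trans; [apply (Rabs_le_sqrt_energy v v1 ub ub1) |].
      apply sqrt_le_1_alt, Hgr; auto. }
  apply Hgr; [lra |]. intros z Hz. specialize (Hboot z Hz). lra.
Qed.

Hypothesis flat : is_little_o_0 (fun x => v x - ub x).

Lemma energy_comparison th : 0 < th ->
  (th + d * d * Rb) * exp ((L + 2) * Rb) < b * b ->
  forall x, 0 < x <= Rb -> energy v v1 ub ub1 x <= (th + d * d * Rb) * exp ((L + 2) * Rb).
Proof.
  intros Hth Hsmall rs Hrs.
  set (eta := Rmin 1 (th / 2)).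
  assert (Heta : 0 < eta /\ eta <= 1 /\ eta <= th / 2) by (unfold eta, Rmin; destruct Rle_dec; lra).
  destruct (is_little_o_0_small_point _ _ difference_derivative flat eta rs)
    as [xi [Hxi [Hwxi Hw1xi]]]; [lra | lra |].
  assert (HExi : energy v v1 ub ub1 xi < th).
  { apply Rabs_def2 in Hwxi. apply Rabs_def2 in Hw1xi. unfold energy. nra. }
  assert (Hmono : (energy v v1 ub ub1 xi + d * d * Rb) * exp ((L + 2) * Rb)
                  <= (th + d * d * Rb) * exp ((L + 2) * Rb))
    by (apply Rmult_le_compat_r; [left; apply exp_pos | lra]).
  eapply Rle_trans; [apply (energy_comparison_from xi rs) |]; lra.
Qed.

End Energy_comparison.

(* With [c^(p-1) = 2^(-q)] and [lam^2 = g^(1-p)] the weight [A^(-q)] becomes [(1+r^2)^q]. *)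
Lemma rescaling_coefficient p q g r X : 1 < p -> 0 < g -> 0 < X ->
  let c := Rpower 2 (- q / (p - 1)) in
  let lam := exp (- ln g / mu p) in
  c * lam ^ 2 / g * Rpower (A r) (- q) * Rpower (g / c * X) p
  = Rpower (1 + r ^ 2) q * Rpower X p.
Proof.
  intros Hp Hg HX c lam.
  assert (Hc : 0 < c) by apply exp_pos. assert (Hl : 0 < lam) by apply exp_pos.
  assert (Hr : 0 < 1 + r ^ 2) by (pose proof (pow2_ge_0 r); lra).
  assert (HA : 0 < A r) by (unfold A; apply Rdiv_lt_0_compat; lra).
  apply ln_inv; unfold Rdiv; try solve_pos.
  rewrite !ln_mult; try solve_pos.
  rewrite !ln_Rpower, !ln_mult; try solve_pos.
  rewrite !ln_Rinv; try solve_pos.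
  unfold c, lam, mu. rewrite !ln_Rpower. simpl pow. rewrite Rmult_1_r.
  rewrite ln_mult, ln_exp by apply exp_pos.
  unfold A, Rdiv. rewrite ln_mult, ln_Rinv by (try apply Rinv_0_lt_compat; lra).
  replace (r * (r * 1)) with (r ^ 2) by ring. field. lra.
Qed.

Lemma rescaled_solution (N : nat) p q g (u u1 u2 : R -> R) : 1 < p -> 0 < g ->
  (forall r, 0 < r -> derivable_pt_lim u r (u1 r) /\ derivable_pt_lim u1 r (u2 r) /\
     u2 r + (INR N - 1) / r * u1 r + INR N * (INR N - 2) / 4 * (A r) ^ 2 * u r
       + Rpower (A r) (- q) * spow (u r) p = 0) ->
  let c := Rpower 2 (- q / (p - 1)) in
  let lam := exp (- ln g / mu p) in
  forall x, 0 < x ->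
  derivable_pt_lim (fun y => c / g * u (lam * y)) x (c / g * lam * u1 (lam * x)) /\
  derivable_pt_lim (fun y => c / g * lam * u1 (lam * y)) x (c / g * lam * lam * u2 (lam * x)) /\
  (0 < c / g * u (lam * x) ->
   c / g * lam * lam * u2 (lam * x) + (INR N - 1) / x * (c / g * lam * u1 (lam * x))
   + lam ^ 2 * (INR N * (INR N - 2) / 4) * (A (lam * x)) ^ 2 * (c / g * u (lam * x))
   + Rpower (1 + (lam * x) ^ 2) q * Rpower (c / g * u (lam * x)) p = 0).
Proof.
  intros Hp Hg Hu c lam x Hx.
  assert (Hc : 0 < c) by apply exp_pos. assert (Hl : 0 < lam) by apply exp_pos.
  assert (Hr : 0 < lam * x) by solve_pos.
  destruct (Hu (lam * x) Hr) as [H1 [H2 H3]].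
  assert (Hlin : forall f f1, derivable_pt_lim f (lam * x) f1 -> forall k,
            derivable_pt_lim (fun y => k * f (lam * y)) x (k * lam * f1)).
  { intros f f1 Hf k. eapply derivable_pt_lim_eq.
    - apply derivable_pt_lim_scal, (derivable_pt_lim_compose (fun y => lam * y) f);
        [apply derivable_pt_lim_linear | exact Hf].
    - ring. }
  split; [now apply Hlin |]. split; [now apply Hlin |].
  intro Hv. assert (HU : 0 < u (lam * x)).
  { assert (0 < c / g) by (apply Rdiv_lt_0_compat; auto).
    apply Rmult_lt_reg_l with (c / g); auto. lra. }
  rewrite spow_pos in H3 by exact HU.
  pose proof (rescaling_coefficient p q g (lam * x) (c / g * u (lam * x)) Hp Hg
    ltac:(apply Rmult_lt_0_compat; [apply Rdiv_lt_0_compat |]; auto)) as Hcoef.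
  fold c lam in Hcoef.
  rewrite <- Hcoef.
  replace (g / c * (c / g * u (lam * x))) with (u (lam * x)) by (field; split; lra).
  transitivity (c * lam ^ 2 / g * (u2 (lam * x) + (INR N - 1) / (lam * x) * u1 (lam * x)
    + INR N * (INR N - 2) / 4 * A (lam * x) ^ 2 * u (lam * x)
    + Rpower (A (lam * x)) (- q) * Rpower (u (lam * x)) p)).
  - field. repeat split; lra.
  - rewrite H3. ring.
Qed.

Lemma rescaled_residual_bound k Kc lam x Rb q p lo M V V1 V2 U U1 U2 :
  0 < x <= Rb -> 0 <= Kc -> 0 <= q -> 1 <= p -> 0 < lo -> lo <= V <= M -> lo <= U <= M ->
  V2 + k / x * V1 + lam ^ 2 * Kc * A (lam * x) ^ 2 * V
    + Rpower (1 + (lam * x) ^ 2) q * Rpower V p = 0 ->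
  U2 + k / x * U1 + Rpower U p = 0 ->
  Rabs ((V2 + k / x * V1) - (U2 + k / x * U1))
  <= 4 * Kc * M * lam ^ 2 + (Rpower (1 + lam ^ 2 * (Rb * Rb)) q - 1) * Rpower M p
     + p * Rpower M (p - 1) * Rabs (V - U).
Proof.
  intros Hx HKc Hq Hp Hlo HV HU HeqV HeqU.
  assert (Hl2 : 0 <= lam ^ 2) by apply pow2_ge_0.
  assert (Hlx : 0 <= (lam * x) ^ 2) by apply pow2_ge_0.
  assert (HA : 0 < A (lam * x) <= 2).
  { unfold A. split; [apply Rdiv_lt_0_compat; lra |].
    apply Rmult_le_reg_r with (1 + (lam * x) ^ 2); [lra |].
    unfold Rdiv. rewrite Rmult_assoc, Rinv_l by lra. lra. }
  set (T := lam ^ 2 * Kc * A (lam * x) ^ 2 * V).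
  assert (HT : 0 <= T <= lam ^ 2 * (4 * Kc * M)).
  { assert (0 <= A (lam * x) ^ 2 <= 4) by (simpl; nra).
    assert (0 <= Kc * (A (lam * x) ^ 2 * V) <= 4 * Kc * M).
    { assert (A (lam * x) ^ 2 * V <= 4 * M) by nra.
      split; [apply Rmult_le_pos; [lra | nra] | nra]. }
    unfold T. replace (lam ^ 2 * Kc * A (lam * x) ^ 2 * V)
      with (lam ^ 2 * (Kc * (A (lam * x) ^ 2 * V))) by ring.
    split; [nra | apply Rmult_le_compat_l; lra]. }
  set (B := Rpower (1 + (lam * x) ^ 2) q).
  assert (HB : 1 <= B <= Rpower (1 + lam ^ 2 * (Rb * Rb)) q).
  { unfold B. split.
    - rewrite <- (Rpower_1_base q) at 1. apply Rle_Rpower_l; lra.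
    - apply Rle_Rpower_l; [lra |]. split; [lra |].
      rewrite Rpow_mult_distr. apply Rplus_le_compat_l, Rmult_le_compat_l; [lra | simpl; nra]. }
  assert (HVp : 0 < Rpower V p <= Rpower M p) by (split; [apply exp_pos | apply Rle_Rpower_l; lra]).
  assert (Hdefect : 0 <= (B - 1) * Rpower V p
                   <= (Rpower (1 + lam ^ 2 * (Rb * Rb)) q - 1) * Rpower M p).
  { split; [apply Rmult_le_pos; lra | apply Rmult_le_compat; lra]. }
  pose proof (Rpower_lipschitz p lo M Hp Hlo V U HV HU) as Hlip. apply Rabs_le_inv in Hlip.
  replace ((V2 + k / x * V1) - (U2 + k / x * U1))
    with (- T - (B - 1) * Rpower V p - (Rpower V p - Rpower U p)) by (unfold T, B in *; lra).
  apply Rabs_le. pose proof (Rabs_pos (V - U)).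
  assert (0 <= p * Rpower M (p - 1) * Rabs (V - U))
    by (apply Rmult_le_pos; [apply Rmult_le_pos; [lra | left; apply exp_pos] | lra]).
  split; lra.
Qed.

Lemma perturbation_vanishes a Q q P d0 : 0 <= a -> 0 < d0 ->
  exists beta, 0 < beta /\
    forall t, 0 <= t < beta -> a * t + (Rpower (1 + t * Q) q - 1) * P < d0.
Proof.
  intros Ha Hd0.
  set (e := d0 / (2 * (Rabs P + 1))).
  assert (He : 0 < e) by (unfold e; pose proof (Rabs_pos P); apply Rdiv_lt_0_compat; lra).
  assert (Hcont : continuity_pt (fun t => Rpower (1 + t * Q) q) 0).
  { eapply derivable_pt_lim_continuity_pt, (derivable_pt_lim_Rpower_comp (fun t => 1 + t * Q)).
    - lra.
    - apply derivable_pt_lim_add; [apply derivable_pt_lim_cst |].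
      apply (derivable_pt_lim_mul (fun t => t) (fun _ => Q));
        [apply derivable_pt_lim_id | apply derivable_pt_lim_cst]. }
  destruct (continuity_pt_eps _ 0 Hcont e He) as [al [Hal Hclose]].
  exists (Rmin al (d0 / (2 * (a + 1)))). split.
  { apply Rmin_pos; [lra | apply Rdiv_lt_0_compat; lra]. }
  intros t Ht.
  assert (Hta : t < al /\ t < d0 / (2 * (a + 1)))
    by (revert Ht; unfold Rmin; destruct Rle_dec; lra).
  specialize (Hclose t ltac:(rewrite Rminus_0_r, Rabs_right; lra)).
  rewrite Rmult_0_l, Rplus_0_r, Rpower_1_base in Hclose.
  assert (a * t <= d0 / 2 * (a / (a + 1))).
  { replace (d0 / 2 * (a / (a + 1))) with (a * (d0 / (2 * (a + 1)))) by (field; lra).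
    apply Rmult_le_compat_l; lra. }
  assert (d0 / 2 * (a / (a + 1)) < d0 / 2).
  { assert (a / (a + 1) < 1); [| nra].
    apply Rmult_lt_reg_r with (a + 1); [lra |]. unfold Rdiv.
    rewrite Rmult_assoc, Rinv_l by lra. lra. }
  assert ((Rpower (1 + t * Q) q - 1) * P < d0 / 2).
  { eapply Rle_lt_trans; [apply Rle_abs |]. rewrite Rabs_mult.
    pose proof (Rabs_pos P). pose proof (Rabs_pos (Rpower (1 + t * Q) q - 1)).
    apply Rle_lt_trans with (e * Rabs P); [apply Rmult_le_compat_r; lra |].
    unfold e. apply Rmult_lt_reg_r with (2 * (Rabs P + 1)); [lra |].
    field_simplify; lra. }
  lra.
Qed.

Lemma rescaling_factor_vanishes mu0 : 0 < mu0 -> forall beta, 0 < beta ->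
  exists G, 0 < G /\ forall g, G < g -> exp (- ln g / mu0) ^ 2 < beta.
Proof.
  intros Hmu beta Hb. exists (exp (- mu0 * ln beta / 2)). split; [apply exp_pos |].
  intros g Hg. assert (Hg0 : 0 < g) by (pose proof (exp_pos (- mu0 * ln beta / 2)); lra).
  assert (Hln : - mu0 * ln beta / 2 < ln g).
  { rewrite <- (ln_exp (- mu0 * ln beta / 2)). apply ln_increasing; [apply exp_pos | lra]. }
  simpl. rewrite Rmult_1_r, <- exp_plus, <- (exp_ln beta) by exact Hb.
  apply exp_increasing.
  apply Rmult_lt_reg_r with (mu0 / 2); [apply Rdiv_lt_0_compat; lra |].
  field_simplify; lra.
Qed.

Lemma supercritical_exponent_facts N p : (3 <= N)%nat -> pS N < p ->
  1 < p /\ 0 < qexp N p /\ INR N / (p + 1) < (INR N - 2) / 2.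
Proof.
  intros HN Hp. assert (HK : 3 <= INR N) by (apply le_INR in HN; simpl in HN; lra).
  unfold pS in Hp.
  assert (HpK : INR N + 2 < p * (INR N - 2)).
  { apply Rmult_lt_compat_r with (r := INR N - 2) in Hp; [| lra].
    unfold Rdiv in Hp. rewrite Rmult_assoc, Rinv_l, Rmult_1_r in Hp by lra. lra. }
  split; [nra |]. split.
  - unfold qexp, pS. apply Rmult_lt_0_compat; lra.
  - apply Rmult_lt_reg_r with (2 * (p + 1)); [nra |]. field_simplify; nra.
Qed.

Lemma yhat_weighted N p g u s : 0 < g -> 0 < p - 1 ->
  yhat N p g u s = exp (mcst N p * mu p * s) / acst N p
    * (Rpower 2 (- qexp N p / (p - 1)) / g * u (exp (- ln g / mu p) * exp (mcst N p * s))).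
Proof.
  intros Hg Hp. unfold yhat, yfun.
  assert (Hm : 0 < mcst N p) by apply exp_pos. assert (Ha : 0 < acst N p) by apply exp_pos.
  assert (Hmu : 0 < mu p) by (unfold mu; apply Rdiv_lt_0_compat; lra).
  replace (exp (mcst N p * (s - ln g / (mcst N p * mu p))))
    with (exp (- ln g / mu p) * exp (mcst N p * s))
    by (rewrite <- exp_plus; f_equal; field; lra).
  replace (exp (- mcst N p * mu p * (s - ln g / (mcst N p * mu p))))
    with (/ exp (mcst N p * mu p * s) * g).
  - pose proof (exp_pos (mcst N p * mu p * s)). field. repeat split; lra.
  - replace (- mcst N p * mu p * (s - ln g / (mcst N p * mu p)))
      with (- (mcst N p * mu p * s) + ln g) by (field; lra).
    now rewrite exp_plus, exp_ln, exp_Ropp.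
Qed.

Lemma ybar_weighted N p ub s :
  ybar N p ub s = exp (mcst N p * mu p * s) / acst N p * ub (exp (mcst N p * s)).
Proof.
  unfold ybar. assert (Ha : 0 < acst N p) by apply exp_pos.
  replace (- mcst N p * mu p * s) with (- (mcst N p * mu p * s)) by ring.
  rewrite exp_Ropp. pose proof (exp_pos (mcst N p * mu p * s)). field. lra.
Qed.

Lemma derivable_pt_lim_weighted (a k k' : R) (f f1 : R -> R) s :
  derivable_pt_lim f (exp (k' * s)) (f1 (exp (k' * s))) ->
  derivable_pt_lim (fun s => exp (k * s) / a * f (exp (k' * s))) s
    (exp (k * s) / a * (k * f (exp (k' * s)) + k' * exp (k' * s) * f1 (exp (k' * s)))).
Proof.
  intro Hf. eapply derivable_pt_lim_eq.
  - apply (derivable_pt_lim_mul (fun s => exp (k * s) / a) (fun s => f (exp (k' * s)))).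
    + apply (derivable_pt_lim_mul (fun s => exp (k * s)) (fun _ => / a));
        [| apply derivable_pt_lim_cst].
      apply (derivable_pt_lim_compose (fun s => k * s) exp);
        [apply derivable_pt_lim_linear | apply derivable_pt_lim_exp].
    + apply (derivable_pt_lim_compose (fun s => exp (k' * s)) f); [| exact Hf].
      apply (derivable_pt_lim_compose (fun s => k' * s) exp);
        [apply derivable_pt_lim_linear | apply derivable_pt_lim_exp].
  - cbv beta. unfold Rdiv. ring.
Qed.

Lemma Lane_Emden_sol_profile n p c ub : 1 < p -> 0 < c ->
  INR (S n) / (p + 1) < (INR (S n) - 2) / 2 -> Lane_Emden_sol (S n) p c ub ->
  exists ub1 ub2 : R -> R,
    is_little_o_0 (fun x => ub x - c) /\
    (forall r, 0 < r -> derivable_pt_lim ub r (ub1 r) /\ derivable_pt_lim ub1 r (ub2 r) /\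
       ub2 r + (INR (S n) - 1) / r * ub1 r + rpow (ub r) p = 0) /\
    (forall r, 0 < r -> 0 < ub r) /\
    (forall x y, 0 < x -> x <= y -> ub y <= ub x) /\
    (forall r, 0 < r -> ub r <= c).
Proof.
  intros Hp Hc Hsuper [_ [Hlim [ub1 [ub2 Hode]]]].
  assert (Hflat := limit1_in_is_little_o_0 ub c Hlim).
  assert (Hode' : forall r, 0 < r -> derivable_pt_lim ub r (ub1 r) /\
     derivable_pt_lim ub1 r (ub2 r) /\ ub2 r + INR n / r * ub1 r + rpow (ub r) p = 0).
  { intros r Hr. replace (INR n) with (INR (S n) - 1) by (rewrite S_INR; ring).
    now apply Hode. }
  assert (Hsuper' : (INR n + 1) / (p + 1) < (INR n - 1) / 2).
  { rewrite S_INR in Hsuper. replace (INR n - 1) with (INR n + 1 - 2) by ring. exact Hsuper. }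
  exists ub1, ub2. split; [exact Hflat | split; [exact Hode |]].
  split; [| split].
  - apply (Lane_Emden_pos n p c ub ub1 ub2); auto.
  - apply (Lane_Emden_antitone n p c ub ub1 ub2); auto.
  - apply (Lane_Emden_le_init n p c ub ub1 ub2); auto.
Qed.

Lemma yhat_derivative N p g (u u1 : R -> R) Dyh s : 1 < p -> 0 < g ->
  (forall r, 0 < r -> derivable_pt_lim u r (u1 r)) ->
  derivable_pt_lim (yhat N p g u) s Dyh ->
  let c := Rpower 2 (- qexp N p / (p - 1)) in
  let lam := exp (- ln g / mu p) in
  let rho := exp (mcst N p * s) in
  Dyh = exp (mcst N p * mu p * s) / acst N p
        * (mcst N p * mu p * (c / g * u (lam * rho))
           + mcst N p * rho * (c / g * lam * u1 (lam * rho))).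
Proof.
  intros Hp Hg Hu Hdyh c lam rho.
  eapply uniqueness_limite; [exact Hdyh |].
  eapply derivable_pt_lim_ext; [intro t; symmetry; apply yhat_weighted; lra |].
  apply (derivable_pt_lim_weighted _ _ _ (fun r => c / g * u (lam * r))
           (fun r => c / g * lam * u1 (lam * r))).
  eapply derivable_pt_lim_eq.
  - apply derivable_pt_lim_scal, (derivable_pt_lim_compose (fun r => lam * r) u);
      [apply derivable_pt_lim_linear | apply Hu, Rmult_lt_0_compat; apply exp_pos].
  - ring.
Qed.

Lemma ybar_derivative N p (ub ub1 : R -> R) Dyb s :
  (forall r, 0 < r -> derivable_pt_lim ub r (ub1 r)) ->
  derivable_pt_lim (ybar N p ub) s Dyb ->
  let rho := exp (mcst N p * s) in
  Dyb = exp (mcst N p * mu p * s) / acst N p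
        * (mcst N p * mu p * ub rho + mcst N p * rho * ub1 rho).
Proof.
  intros Hub Hdyb rho.
  eapply uniqueness_limite; [exact Hdyb |].
  eapply derivable_pt_lim_ext; [intro t; symmetry; apply ybar_weighted |].
  apply (derivable_pt_lim_weighted _ _ _ ub ub1), Hub, exp_pos.
Qed.

Lemma yhat_ybar_close N p g (u u1 ub ub1 : R -> R) Dyh Dyb s s0 eta : 1 < p -> 0 < g ->
  s <= s0 ->
  (forall r, 0 < r -> derivable_pt_lim u r (u1 r)) ->
  (forall r, 0 < r -> derivable_pt_lim ub r (ub1 r)) ->
  derivable_pt_lim (yhat N p g u) s Dyh -> derivable_pt_lim (ybar N p ub) s Dyb ->
  let c := Rpower 2 (- qexp N p / (p - 1)) in
  let lam := exp (- ln g / mu p) in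
  let rho := exp (mcst N p * s) in
  Rabs (c / g * u (lam * rho) - ub rho) < eta ->
  Rabs (c / g * lam * u1 (lam * rho) - ub1 rho) < eta ->
  let Z := exp (mcst N p * mu p * s0) / acst N p in
  Rabs (yhat N p g u s - ybar N p ub s) <= Z * eta /\
  Rabs (Dyh - Dyb) <= Z * (mcst N p * (mu p + exp (mcst N p * s0))) * eta.
Proof.
  intros Hp Hg Hs Hu Hub Hdyh Hdyb c lam rho Hclose Hclose1 Z.
  rewrite (yhat_derivative N p g u u1 Dyh s Hp Hg Hu Hdyh),
    (ybar_derivative N p ub ub1 Dyb s Hub Hdyb), yhat_weighted, ybar_weighted by lra.
  fold c lam rho. set (m := mcst N p). set (W := exp (m * mu p * s) / acst N p).
  assert (Hm : 0 < m) by apply exp_pos.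
  assert (Hmu : 0 < mu p) by (unfold mu; apply Rdiv_lt_0_compat; lra).
  assert (Hrho : 0 < rho <= exp (m * s0))
    by (split; [apply exp_pos | apply exp_le_mono, Rmult_le_compat_l; lra]).
  assert (HW : 0 < W <= Z).
  { unfold Z. fold m. split; [apply Rdiv_lt_0_compat; apply exp_pos |].
    apply Rmult_le_compat_r; [left; apply Rinv_0_lt_compat, exp_pos |].
    apply exp_le_mono, Rmult_le_compat_l; [apply Rmult_le_pos |]; lra. }
  rewrite <- !Rmult_minus_distr_l, !Rabs_mult, (Rabs_right W) by lra.
  set (w := c / g * u (lam * rho) - ub rho) in *.
  set (w1 := c / g * lam * u1 (lam * rho) - ub1 rho) in *.
  replace (m * mu p * (c / g * u (lam * rho)) + m * rho * (c / g * lam * u1 (lam * rho))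
           - (m * mu p * ub rho + m * rho * ub1 rho))
    with (m * mu p * w + m * rho * w1) by (unfold w, w1; ring).
  pose proof (Rabs_pos w). pose proof (Rabs_pos w1).
  split; [apply Rmult_le_compat; lra |].
  replace (Z * (m * (mu p + exp (m * s0))) * eta)
    with (Z * (m * mu p * eta + m * exp (m * s0) * eta)) by ring.
  apply Rmult_le_compat; try lra; [apply Rabs_pos |].
  eapply Rle_trans; [apply Rabs_triang |].
  rewrite !Rabs_mult, (Rabs_right m), (Rabs_right (mu p)), (Rabs_right rho) by lra.
  assert (m * mu p * Rabs w <= m * mu p * eta)
    by (apply Rmult_le_compat_l; [apply Rmult_le_pos |]; lra).
  assert (m * rho * Rabs w1 <= m * exp (m * s0) * eta)
    by (apply Rmult_le_compat; [apply Rmult_le_pos | | apply Rmult_le_compat_l |]; lra).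
  lra.
Qed.

Lemma comparison_constants a Q q P L Rb e : 0 <= a -> 0 <= Q -> 0 <= q -> 0 <= P ->
  0 < Rb -> 0 < e ->
  exists th beta, 0 < th /\ 0 < beta /\ forall t, 0 <= t < beta ->
    let d := a * t + (Rpower (1 + t * Q) q - 1) * P in
    0 <= d /\ (th + d * d * Rb) * exp ((L + 2) * Rb) < e * e.
Proof.
  intros Ha HQ Hq HP HRb He.
  set (Kx := exp ((L + 2) * Rb)). assert (HKx : 0 < Kx) by apply exp_pos.
  set (d0 := Rmin 1 (e * e / (4 * Kx * Rb))).
  assert (Hd0 : 0 < d0 /\ d0 <= 1 /\ d0 * (4 * Kx * Rb) <= e * e).
  { assert (Hq0 : 0 < e * e / (4 * Kx * Rb)) by (apply Rdiv_lt_0_compat; solve_pos; nra).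
    assert (e * e / (4 * Kx * Rb) * (4 * Kx * Rb) = e * e) by (field; lra).
    assert (d0 <= e * e / (4 * Kx * Rb)) by apply Rmin_r.
    split; [apply Rmin_pos; lra | split; [apply Rmin_l | nra]]. }
  destruct (perturbation_vanishes a Q q P d0) as [beta [Hbeta Hpert]]; [lra | lra |].
  exists (e * e / (4 * Kx)), beta. split; [apply Rdiv_lt_0_compat; nra |].
  split; [exact Hbeta |]. intros t Ht d.
  assert (Hd : 0 <= d < d0).
  { split; [| now apply Hpert].
    assert (1 <= Rpower (1 + t * Q) q).
    { rewrite <- (Rpower_1_base q) at 1. apply Rle_Rpower_l; [exact Hq | nra]. }
    unfold d. apply Rplus_le_le_0_compat; apply Rmult_le_pos; lra. }
  split; [lra |]. fold Kx.
  assert (e * e / (4 * Kx) * Kx = e * e / 4) by (field; lra).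
  assert (d * d * Rb * Kx <= d * Rb * Kx).
  { apply Rmult_le_compat_r; [lra |]. apply Rmult_le_compat_r; [lra | nra]. }
  assert (d * (4 * Kx * Rb) < d0 * (4 * Kx * Rb)) by (apply Rmult_lt_compat_r; nra).
  nra.
Qed.

Definition IVP_equation (N : nat) (p : R) (u u1 u2 : R -> R) : Prop :=
  forall r, 0 < r -> derivable_pt_lim u r (u1 r) /\ derivable_pt_lim u1 r (u2 r) /\
    u2 r + (INR N - 1) / r * u1 r + INR N * (INR N - 2) / 4 * (A r) ^ 2 * u r
      + Rpower (A r) (- qexp N p) * spow (u r) p = 0.

Section Convergence.

Variables (n : nat) (p : R) (ub ub1 ub2 : R -> R).
Hypothesis p_gt1 : 1 < p.
Hypothesis n_ge1 : 1 <= INR n.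
Hypothesis qexp_nonneg : 0 <= qexp (S n) p.
Hypothesis ub_flat : is_little_o_0 (fun x => ub x - Rpower 2 (- qexp (S n) p / (p - 1))).
Hypothesis ub_ode : forall r, 0 < r ->
  derivable_pt_lim ub r (ub1 r) /\ derivable_pt_lim ub1 r (ub2 r) /\
  ub2 r + (INR (S n) - 1) / r * ub1 r + rpow (ub r) p = 0.
Hypothesis ub_pos : forall r, 0 < r -> 0 < ub r.
Hypothesis ub_antitone : forall x y, 0 < x -> x <= y -> ub y <= ub x.
Hypothesis ub_le_init : forall r, 0 < r -> ub r <= Rpower 2 (- qexp (S n) p / (p - 1)).

(* The rescaled [u] solves a perturbation of the Lane-Emden equation of size [d]
   on [(0, Rb]], as long as it stays within [ub Rb / 2] of [ub]. *)
Lemma rescaled_energy_bound Rb th d g (uu u1 u2 : R -> R) :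
  0 < Rb -> 0 < g -> 0 < th -> 0 <= d ->
  is_little_o_0 (fun r => uu r - g) -> IVP_equation (S n) p uu u1 u2 ->
  let c := Rpower 2 (- qexp (S n) p / (p - 1)) in
  let lam := exp (- ln g / mu p) in
  let M := c + ub Rb / 2 in
  let L := p * Rpower M (p - 1) in
  INR (S n) * (INR (S n) - 2) * M * lam ^ 2
    + (Rpower (1 + lam ^ 2 * (Rb * Rb)) (qexp (S n) p) - 1) * Rpower M p <= d ->
  (th + d * d * Rb) * exp ((L + 2) * Rb) < ub Rb / 2 * (ub Rb / 2) ->
  forall x, 0 < x <= Rb ->
    energy (fun y => c / g * uu (lam * y)) (fun y => c / g * lam * u1 (lam * y)) ub ub1 x
      <= (th + d * d * Rb) * exp ((L + 2) * Rb).
Proof.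
  intros HRb Hg Hth Hd Hflat Hode c lam M L Hdefect Hsmall.
  assert (Hc : 0 < c) by apply exp_pos. assert (Hlam : 0 < lam) by apply exp_pos.
  assert (Hbb : 0 < ub Rb / 2) by (pose proof (ub_pos Rb HRb); lra).
  set (K := INR (S n)). assert (HK : 2 <= K) by (unfold K; rewrite S_INR; lra).
  pose proof (rescaled_solution (S n) p (qexp (S n) p) g uu u1 u2 p_gt1 Hg Hode) as Hv.
  cbv zeta in Hv. fold c lam in Hv.
  apply (energy_comparison (K - 1) Rb (ub Rb / 2) L d _ _
           (fun y => c / g * lam * lam * u2 (lam * y)) ub ub1 ub2); try lra.
  - apply Rmult_le_pos; [lra | left; apply exp_pos].
  - intros x Hx. destruct (Hv x Hx) as [? [? _]]. destruct (ub_ode x Hx) as [? [? _]]. tauto.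
  - intros x Hx Hw. apply Rabs_def2 in Hw.
    assert (Hub : ub Rb <= ub x <= c) by (split; [apply ub_antitone | apply ub_le_init]; lra).
    destruct (Hv x (proj1 Hx)) as [_ [_ Heqv]].
    destruct (ub_ode x (proj1 Hx)) as [_ [_ Hequ]].
    rewrite rpow_pos_base in Hequ by lra.
    eapply Rle_trans.
    + apply (rescaled_residual_bound (K - 1) (K * (K - 2) / 4) lam x Rb (qexp (S n) p) p
               (ub Rb / 2) M (c / g * uu (lam * x)) (c / g * lam * u1 (lam * x))
               (c / g * lam * lam * u2 (lam * x)) (ub x) (ub1 x) (ub2 x));
        try (unfold M; lra); [nra | apply Heqv; lra | exact Hequ].
    + replace (4 * (K * (K - 2) / 4) * M * lam ^ 2) with (K * (K - 2) * M * lam ^ 2)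
        by field.
      unfold K, L. lra.
  - apply (is_little_o_0_ext (fun x => c / g * (uu (lam * x) - g) - (ub x - c))).
    + intros x Hx. field. lra.
    + apply is_little_o_0_sub; [| exact ub_flat].
      apply (is_little_o_0_rescale (fun r => uu r - g)); [exact Hlam | exact Hflat].
Qed.

Lemma rescaled_close Rb eta : 0 < Rb -> 0 < eta ->
  exists G, 0 < G /\ forall g, G < g -> forall uu u1 u2 : R -> R,
    is_little_o_0 (fun r => uu r - g) -> IVP_equation (S n) p uu u1 u2 ->
    let c := Rpower 2 (- qexp (S n) p / (p - 1)) in
    let lam := exp (- ln g / mu p) in
    forall x, 0 < x <= Rb ->
      Rabs (c / g * uu (lam * x) - ub x) < eta /\
      Rabs (c / g * lam * u1 (lam * x) - ub1 x) < eta.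
Proof.
  intros HRb Heta.
  set (M := Rpower 2 (- qexp (S n) p / (p - 1)) + ub Rb / 2).
  assert (HM : 0 < M).
  { pose proof (ub_pos Rb HRb). pose proof (exp_pos (- qexp (S n) p / (p - 1) * ln 2)).
    unfold M, Rpower in *. lra. }
  set (e := Rmin (ub Rb / 2) eta).
  assert (He : 0 < e /\ e <= ub Rb / 2 /\ e <= eta)
    by (pose proof (ub_pos Rb HRb); unfold e, Rmin; destruct Rle_dec; lra).
  destruct (comparison_constants (INR (S n) * (INR (S n) - 2) * M) (Rb * Rb) (qexp (S n) p)
              (Rpower M p) (p * Rpower M (p - 1)) Rb e)
    as [th [beta [Hth [Hbeta Hconst]]]];
    [rewrite S_INR; apply Rmult_le_pos; [apply Rmult_le_pos |]; lra | nra |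
     exact qexp_nonneg | left; apply exp_pos | lra | lra |].
  destruct (rescaling_factor_vanishes (mu p) ltac:(unfold mu; apply Rdiv_lt_0_compat; lra)
    beta Hbeta) as [G [HG Hlam_small]].
  exists G. split; [exact HG |]. intros g Hg uu u1 u2 Hflat Hode c lam x Hx.
  set (d := INR (S n) * (INR (S n) - 2) * M * lam ^ 2
           + (Rpower (1 + lam ^ 2 * (Rb * Rb)) (qexp (S n) p) - 1) * Rpower M p).
  destruct (Hconst (lam ^ 2) ltac:(split; [apply pow2_ge_0 | now apply Hlam_small]))
    as [Hd HTh].
  fold d in Hd, HTh.
  assert (Hsmall : (th + d * d * Rb) * exp ((p * Rpower M (p - 1) + 2) * Rb)
                    < ub Rb / 2 * (ub Rb / 2)).
  { assert (e * e <= ub Rb / 2 * (ub Rb / 2)) by (apply Rmult_le_compat; lra). lra. }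
  pose proof (Rle_lt_trans _ _ _ (rescaled_energy_bound Rb th d g uu u1 u2 HRb ltac:(lra)
                Hth Hd Hflat Hode (Rle_refl _) Hsmall x Hx) HTh) as Hcmp.
  unfold energy in Hcmp. cbv beta in Hcmp. fold c lam in Hcmp.
  assert (Hsq : forall w w1, w * w + w1 * w1 < e * e -> Rabs w < eta).
  { intros w w1 Hww. rewrite <- (Rabs_right eta) by lra. apply Rsqr_lt_abs_0.
    pose proof (Rle_0_sqr w1). assert (e * e <= eta * eta) by (apply Rmult_le_compat; lra).
    unfold Rsqr in *. nra. }
  split; [apply (Hsq _ (c / g * lam * u1 (lam * x) - ub1 x))
         | apply (Hsq _ (c / g * uu (lam * x) - ub x))]; lra.
Qed.

Lemma yhat_uniform_close (u : R -> R -> R) (Dyhat : R -> R -> R) (Dybar : R -> R) s0 eta :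
  (forall gamma, 0 < gamma -> IVP_sol (S n) p gamma (u gamma)) ->
  (forall gamma, 0 < gamma -> forall s,
     derivable_pt_lim (yhat (S n) p gamma (u gamma)) s (Dyhat gamma s)) ->
  (forall s, derivable_pt_lim (ybar (S n) p ub) s (Dybar s)) ->
  0 < eta ->
  let Z := exp (mcst (S n) p * mu p * s0) / acst (S n) p in
  exists G, 0 < G /\ forall gamma, G < gamma -> forall s, s <= s0 ->
    Rabs (yhat (S n) p gamma (u gamma) s - ybar (S n) p ub s) <= Z * eta /\
    Rabs (Dyhat gamma s - Dybar s)
      <= Z * (mcst (S n) p * (mu p + exp (mcst (S n) p * s0))) * eta.
Proof.
  intros Hu Hdyhat Hdybar Heta Z.
  set (Rb := exp (mcst (S n) p * s0)).
  destruct (rescaled_close Rb eta (exp_pos _) Heta) as [G [HG Hclose]].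
  exists G. split; [exact HG |]. intros g Hg s Hs.
  destruct (Hu g ltac:(lra)) as [_ [Hlim [u1 [u2 Hude]]]].
  assert (Hrho : 0 < exp (mcst (S n) p * s) <= Rb).
  { split; [apply exp_pos | apply exp_le_mono, Rmult_le_compat_l; [left; apply exp_pos | lra]]. }
  destruct (Hclose g Hg (u g) u1 u2 (limit1_in_is_little_o_0 _ _ Hlim) Hude _ Hrho)
    as [Hv Hv1].
  apply (yhat_ybar_close (S n) p g (u g) u1 ub ub1); auto; try lra.
  - intros r Hr. apply Hude, Hr.
  - intros r Hr. apply ub_ode, Hr.
  - apply Hdyhat. lra.
Qed.

End Convergence.

Theorem lemma5p2 (N : nat) (p : R) (u : R -> R -> R) (ub : R -> R)
    (Dyhat : R -> R -> R) (Dybar : R -> R) :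
  (3 <= N)%nat ->
  pS N < p ->
  (forall gamma, 0 < gamma -> IVP_sol N p gamma (u gamma)) ->
  Lane_Emden_sol N p (Rpower 2 (- qexp N p / (p - 1))) ub ->
  (forall gamma, 0 < gamma -> forall s,
     derivable_pt_lim (yhat N p gamma (u gamma)) s (Dyhat gamma s)) ->
  (forall s, derivable_pt_lim (ybar N p ub) s (Dybar s)) ->
  forall s0 eps, 0 < eps ->
    exists G, 0 < G /\ forall gamma, G < gamma -> forall s, s <= s0 ->
      Rabs (yhat N p gamma (u gamma) s - ybar N p ub s) < eps /\
      Rabs (Dyhat gamma s - Dybar s) < eps.
Proof.
  intros HN Hp Hu Hub Hdyhat Hdybar s0 eps Heps.
  destruct (supercritical_exponent_facts N p HN Hp) as [Hp1 [Hq Hsuper]].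
  destruct N as [| n]; [lia |].
  assert (Hn : 1 <= INR n) by (apply (le_INR 1); lia).
  destruct (Lane_Emden_sol_profile n p _ ub Hp1 (exp_pos _) Hsuper Hub)
    as [ub1 [ub2 [Hflat [Hode [Hpos [Hanti Hle]]]]]].
  set (Z := exp (mcst (S n) p * mu p * s0) / acst (S n) p).
  set (X := Z * (mcst (S n) p * (mu p + exp (mcst (S n) p * s0)))).
  assert (HZ : 0 < Z) by (apply Rdiv_lt_0_compat; apply exp_pos).
  assert (HX : 0 < X).
  { assert (0 < mu p) by (unfold mu; apply Rdiv_lt_0_compat; lra).
    pose proof (exp_pos (mcst (S n) p * s0)).
    apply Rmult_lt_0_compat, Rmult_lt_0_compat; [lra | apply exp_pos | lra]. }
  set (eta := eps / (Z + X)).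
  assert (Heta : 0 < eta /\ Z * eta + X * eta = eps).
  { split; [apply Rdiv_lt_0_compat; lra | unfold eta; field; lra]. }
  destruct (yhat_uniform_close n p ub ub1 ub2 Hp1 Hn (Rlt_le _ _ Hq) Hflat Hode Hpos Hanti Hle
              u Dyhat Dybar s0 eta Hu Hdyhat Hdybar (proj1 Heta)) as [G [HG Hclose]].
  exists G. split; [exact HG |]. intros g Hg s Hs.
  destruct (Hclose g Hg s Hs) as [Hy Hdy]. fold Z X in Hy, Hdy.
  assert (0 < Z * eta) by (apply Rmult_lt_0_compat; lra).
  assert (0 < X * eta) by (apply Rmult_lt_0_compat; lra).
  split; lra.
Qed.
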